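(* Let $f\in\mathbb Z[x,x^{-1}]$ be a Laurent polynomial with integer coefficients which is hyperbolic (no complex root on the unit circle). Then $f\cdot\mathbb Z_{ac}(x)\cap\mathbb Z_{ac}[x)=f\cdot\mathbb Z_{ac}[x)$.
   Context: A formal Laurent series $\sum_{n\in\mathbb Z}c_nx^n$ is almost convergent if $\limsup_{n\to\infty}|c_n|^{1/n}\le1$ and $\limsup_{n\to\infty}|c_{-n}|^{1/n}\le1$. $\mathbb Z_{ac}(x)$ denotes the ring (under formal multiplication where defined; here products with Laurent polynomials) of almost convergent two-sided Laurent series with integer coefficients, and $\mathbb Z_{ac}[x)$ the subset of those of the form $\sum_{n\ge m}a_nx^n$ for some $m\in\mathbb Z$ (only finitely many negative powers). *)

From HB Require Import structures.
From mathcomp Require Import all_boot all_order all_algebra all_field.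
Set Implicit Arguments. Unset Strict Implicit. Unset Printing Implicit Defensive.
Import Order.TTheory GRing.Theory Num.Theory.
Local Open Scope ring_scope.

(* A Laurent polynomial f = x^(lsh f) * (lp f)(x) with integer coefficients. *)
Record laurent := Laurent { lp : {poly int}; lsh : int }.

Definition lcoef (f : laurent) (k : int) : int :=
  match k - lsh f with Posz i => (lp f)`_i | Negz _ => 0 end.

Definition leval (f : laurent) (z : algC) : algC :=
  z ^ (lsh f) * (map_poly intr (lp f)).[z].

Definition hyperbolic (f : laurent) : Prop :=
  forall z : algC, `|z| = 1 -> leval f z != 0.

(* Two-sided formal Laurent series with integer coefficients: c n = coefficient of x^n. *)
Definition series := int -> int.

Definition lmul (f : laurent) (c : series) : series :=
  fun n => \sum_(i < size (lp f)) (lp f)`_i * c (n - lsh f - i%:Z).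

(* limsup_{n -> oo} |a_n|^(1/n) <= 1, written out with rational epsilons. *)
Definition limsup_root_le1 (a : nat -> int) : Prop :=
  forall e : rat, 0 < e ->
    exists N : nat, forall n : nat, (N <= n)%N -> (`|a n|)%:~R <= (1 + e) ^+ n.

Definition almost_convergent (c : series) : Prop :=
  limsup_root_le1 (fun n => c n%:Z) /\ limsup_root_le1 (fun n => c (- n%:Z)).

Definition Zac_half (c : series) : Prop :=
  almost_convergent c /\ exists m : int, forall n : int, n < m -> c n = 0.

From HB Require Import structures.
From mathcomp Require Import all_boot all_order all_algebra all_field.
From mathcomp Require Import ring lra zify.
Import Order.TTheory GRing.Theory Num.Theory.
Local Open Scope ring_scope.
Set Implicit Arguments. Unset Strict Implicit. Unset Printing Implicit Defensive.

(* Suppose d = f c with c almost convergent and d vanishing far to the left.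
   There the coefficients b_k = c_(j-k) satisfy the recurrence Q(S) b = 0, where
   Q is the polynomial part of f and S the shift, and b grows subexponentially.
   Split off the linear factors X - beta of Q one at a time: exponential decay
   of (S - beta) b passes to b, forwards when |beta| < 1 and, thanks to the
   subexponential growth of b, backwards when |beta| > 1; hyperbolicity rules
   out |beta| = 1.  Hence b decays exponentially, and an integer sequence that
   does so is eventually zero.  The other inclusion only uses that multiplying
   by a Laurent polynomial preserves almost convergence. *)

Lemma bernoulli (R : numDomainType) (h : R) n : 0 <= h -> 1 + h *+ n <= (1 + h) ^+ n.
Proof.
move=> h0; elim: n => [|n IH]; first by rewrite mulr0n addr0 expr0.
rewrite exprS; apply: le_trans (_ : (1 + h) * (1 + h *+ n) <= _).
  rewrite -subr_ge0 mulrSr.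
  have -> : (1 + h) * (1 + h *+ n) - (1 + (h *+ n + h)) = h * (h *+ n) by ring.
  by rewrite mulr_ge0 // mulrn_wge0.
by rewrite ler_wpM2l // addr_ge0.
Qed.

Section Geometric.
Variable R : archiNumFieldType.

Lemma exists_gt_mul_expr (x t K : R) : 0 < x -> 1 < t -> 0 <= K ->
  exists m, K < x * t ^+ m.
Proof.
move=> x_gt0 t_gt1 K_ge0; set h := t - 1; have h_gt0 : 0 < h by rewrite subr_gt0.
have xh_gt0 : 0 < x * h by rewrite mulr_gt0.
have /andP[_] := truncn_itv (divr_ge0 K_ge0 (ltW xh_gt0)).
set m := (Num.truncn _).+1; rewrite ltr_pdivrMr // => K_lt.
exists m; apply: (lt_le_trans K_lt); rewrite mulrCA ler_pM2l //.
apply: le_trans (_ : 1 + h *+ m <= _); first by rewrite mulr_natl lerDr.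
by rewrite (_ : t = 1 + h) ?bernoulli ?ltW // /h; ring.
Qed.

Lemma exists_mul_expr_lt (a q e : R) : 0 <= a -> 0 <= q -> q < 1 -> 0 < e ->
  exists m, a * q ^+ m < e.
Proof.
move=> a_ge0 q_ge0 q_lt1 e_gt0; have [->|q_neq0] := eqVneq q 0.
  by exists 1%N; rewrite expr1 mulr0.
have q_gt0 : 0 < q by rewrite lt_def q_neq0.
have q_inv_gt1 : 1 < q^-1 by rewrite invf_gt1.
have [m a_lt] := exists_gt_mul_expr e_gt0 q_inv_gt1 a_ge0.
by exists m; rewrite -ltr_pdivlMr ?exprn_gt0 // -exprVn.
Qed.

End Geometric.

Section Shift.
Variable R : nzRingType.
Implicit Types (Q : {poly R}) (b : nat -> R) (beta : R).

Definition shift_sub beta b k := b k.+1 - beta * b k.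

(* [poly_shift Q b] is [Q(S) b] for the shift [S b = fun k => b k.+1]. *)
Definition poly_shift Q b k := \sum_(i < size Q) Q`_i * b (k + i)%N.

Lemma poly_shift_widen Q b k n : (size Q <= n)%N ->
  poly_shift Q b k = \sum_(i < n) Q`_i * b (k + i)%N.
Proof.
move=> le_Qn; rewrite /poly_shift -(subnKC le_Qn) big_split_ord /=.
by rewrite [X in _ = _ + X]big1 ?addr0 // => i _; rewrite nth_default ?mul0r ?leq_addr.
Qed.

Lemma poly_shift_mulXsubC Q beta b k :
  poly_shift (Q * ('X - beta%:P)) b k = poly_shift Q (shift_sub beta b) k.
Proof.
have le_size : (size (Q * ('X - beta%:P))%R <= (size Q).+1)%N.
  by apply: leq_trans (size_polyMleq _ _) _; rewrite size_XsubC addn2.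
rewrite (poly_shift_widen _ _ le_size) (poly_shift_widen _ _ (leqnSn _)).
under eq_bigr do rewrite mulrBr coefB coefMC mulrBl.
under [in RHS]eq_bigr do rewrite mulrBr mulrA.
rewrite !sumrB; congr (_ - _).
rewrite big_ord_recl coefMX /= mul0r add0r big_ord_recr /=.
rewrite [Q`_(size Q)]nth_default // mul0r addr0.
by apply: eq_bigr => i _; rewrite coefMX /= addnS.
Qed.
End Shift.

Section ShiftRecurrence.
Variable R : archiNumFieldType.
Implicit Types (b : nat -> R) (beta : R).

Definition subexponential b :=
  forall g : R, 1 < g -> exists K, forall k, `|b k| <= K * g ^+ k.

Definition exp_decaying b := exists C rho : R,
  [/\ 0 <= C, 0 <= rho, rho < 1 & forall k, `|b k| <= C * rho ^+ k].

Lemma eq_exp_decaying b1 b2 : b1 =1 b2 -> exp_decaying b1 -> exp_decaying b2.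
Proof.
by move=> eq_b [C [rho [C_ge0 rho_ge0 rho_lt1 bound]]]; exists C, rho; split=> // k; rewrite -eq_b.
Qed.

Lemma subexponential_shift_sub beta b :
  subexponential b -> subexponential (shift_sub beta b).
Proof.
move=> sb g g_gt1; have [K bound] := sb g g_gt1.
exists (K * g + `|beta| * K) => k; apply: le_trans (ler_normB _ _) _.
rewrite normrM mulrDl; apply: lerD; first by rewrite -mulrA -exprS.
by rewrite -mulrA ler_wpM2l.
Qed.

Lemma exists_between_lt1 (t rho : R) : 0 <= t -> t < 1 -> 0 <= rho -> rho < 1 ->
  exists s, [/\ t < s, rho <= s & s < 1].
Proof.
move=> t_ge0 t_lt1 rho_ge0 rho_lt1.
have pos_half x y : x < 1 -> 0 <= y -> 0 < (1 - x) * (1 + y) / 2.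
  by move=> x_lt1 y_ge0; rewrite !divr_gt0 ?mulr_gt0 ?subr_gt0 ?ltr_wpDr.
exists (1 - (1 - t) * (1 - rho) / 2); split.
- by rewrite -subr_gt0 (_ : _ - t = (1 - t) * (1 + rho) / 2) ?pos_half //; field.
- by rewrite -subr_ge0 ltW // (_ : _ - rho = (1 - rho) * (1 + t) / 2) ?pos_half //; field.
- by rewrite -subr_gt0 opprB addrC subrK !divr_gt0 ?mulr_gt0 ?subr_gt0.
Qed.

Lemma exp_decaying_shift_sub_lt1 beta b : `|beta| < 1 ->
  exp_decaying (shift_sub beta b) -> exp_decaying b.
Proof.
move=> t_lt1 [C [rho [C_ge0 rho_ge0 rho_lt1 bound]]].
set t := `|beta| in t_lt1.
have [s [t_lt_s rho_le_s s_lt1]] := exists_between_lt1 (normr_ge0 beta) t_lt1 rho_ge0 rho_lt1.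
have st_gt0 : 0 < s - t by rewrite subr_gt0.
have s_ge0 : 0 <= s := le_trans rho_ge0 rho_le_s.
set D := `|b 0| + C / (s - t).
have D_ge0 : 0 <= D by rewrite addr_ge0 // divr_ge0 // ltW.
exists D, s; split => // k.
elim: k => [|k IH]; first by rewrite expr0 mulr1 /D lerDl divr_ge0 // ltW.
rewrite (_ : b k.+1 = shift_sub beta b k + beta * b k); last by rewrite /shift_sub; ring.
apply: le_trans (ler_normD _ _) _; rewrite normrM.
apply: le_trans (lerD (bound k) (ler_wpM2l (normr_ge0 beta) IH)) _.
apply: le_trans (_ : (C + t * D) * s ^+ k <= _).
  by rewrite [(C + _) * _]mulrDl -mulrA lerD ?ler_wpM2l // lerXn2r ?nnegrE.
rewrite exprS mulrA ler_wpM2r ?exprn_ge0 // -subr_ge0.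
rewrite (_ : _ - _ = `|b 0| * (s - t)); first by rewrite mulr_ge0 // ltW.
by rewrite /D; field; rewrite gt_eqF.
Qed.

Lemma exp_decaying_shift_sub_gt1 beta b : subexponential b -> 1 < `|beta| ->
  exp_decaying (shift_sub beta b) -> exp_decaying b.
Proof.
move=> sb t_gt1 [C [rho [C_ge0 rho_ge0 rho_lt1 bound]]].
set t := `|beta| in t_gt1.
have t_gt0 : 0 < t := lt_trans ltr01 t_gt1.
have t1_gt0 : 0 < t - 1 by rewrite subr_gt0.
set D := C / (t - 1).
have D_ge0 : 0 <= D by rewrite /D divr_ge0 // ltW.
have step k : t * `|b k| <= `|b k.+1| + C * rho ^+ k.
  rewrite -normrM (_ : beta * b k = b k.+1 - shift_sub beta b k); last by rewrite /shift_sub; ring.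
  by apply: le_trans (ler_normB _ _) _; rewrite lerD2l.
(* From b_k = beta^-m b_(k+m) - \sum_(j < m) beta^-(j+1) (shift_sub beta b)_(k+j). *)
have telescope m k : `|b k| <= `|b (k + m)%N| / t ^+ m + D * rho ^+ k.
  elim: m k => [|m IH] k; first by rewrite addn0 expr0 divr1 lerDl mulr_ge0 ?exprn_ge0.
  rewrite -(ler_pM2l t_gt0).
  rewrite (_ : t * (_ + _) = `|b (k + m.+1)%N| / t ^+ m + t * D * rho ^+ k); last first.
    by rewrite exprS; field; rewrite ?expf_neq0 gt_eqF.
  apply: le_trans (step k) _; rewrite addnS -addSn.
  apply: le_trans (lerD (IH k.+1) (lexx _)) _; rewrite -addrA lerD2l -subr_ge0.
  rewrite (_ : _ - _ = D * rho ^+ k * (1 - rho)); last by rewrite /D exprS; field; rewrite gt_eqF.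
  have rho_le1 : 0 <= 1 - rho by rewrite subr_ge0 ltW.
  exact: mulr_ge0 (mulr_ge0 D_ge0 (exprn_ge0 k rho_ge0)) rho_le1.
exists D, rho; split => // k.
have [] := midf_lt t_gt1; move: (_ / 2) => g g_gt1 g_lt_t.
have g_gt0 : 0 < g := lt_trans ltr01 g_gt1.
have [K bound_b] := sb g g_gt1.
have K_ge0 : 0 <= K by have := bound_b 0%N; rewrite expr0 mulr1; apply: le_trans.
apply/ler_addgt0Pr => e e_gt0.
have gt_ge0 : 0 <= g / t by rewrite divr_ge0 ?ltW.
have gt_lt1 : g / t < 1 by rewrite ltr_pdivrMr // mul1r.
have Kg_ge0 : 0 <= K * g ^+ k := mulr_ge0 K_ge0 (exprn_ge0 k (ltW g_gt0)).
have [m small] := exists_mul_expr_lt Kg_ge0 gt_ge0 gt_lt1 e_gt0.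
apply: le_trans (telescope m k) _; rewrite addrC lerD2l.
apply: le_trans (ltW small); rewrite ler_pdivrMr ?exprn_gt0 //.
rewrite (_ : _ * t ^+ m = K * g ^+ (k + m)); first exact: bound_b.
by rewrite exprD exprMn exprVn; field; rewrite expf_neq0 ?gt_eqF.
Qed.

End ShiftRecurrence.

Section UnitCircleFree.
Variable R : archiClosedFieldType.
Implicit Types (Q : {poly R}) (b : nat -> R).

Definition no_unit_root Q := forall z : R, `|z| = 1 -> ~~ root Q z.

Lemma exp_decaying_poly_shift Q b : Q != 0 -> no_unit_root Q -> subexponential b ->
  exp_decaying (poly_shift Q b) -> exp_decaying b.
Proof.
have [n] := ubnP (size Q); elim: n Q b => // n IH Q b lt_Qn Q_neq0 Q_roots sb.
have [/eqP size_Q1|size_Q_neq1] := boolP (size Q == 1%N).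
  have c_neq0 : Q`_0 != 0 by move: Q_neq0; rewrite -lead_coef_eq0 lead_coefE size_Q1.
  have c_gt0 : 0 < `|Q`_0| by rewrite normr_gt0.
  move=> [C [rho [C_ge0 rho_ge0 rho_lt1 bound]]].
  have C'_ge0 : 0 <= C / `|Q`_0| by rewrite divr_ge0.
  exists (C / `|Q`_0|), rho; split => // k.
  move: (bound k); rewrite /poly_shift size_Q1 big_ord1 addn0 normrM => bound_k.
  by rewrite mulrAC ler_pdivlMr // mulrC.
have [beta root_beta] := closed_rootP Q size_Q_neq1.
have [Q' def_Q] := factor_theorem _ _ root_beta.
have Q'_neq0 : Q' != 0 by apply: contraNneq Q_neq0 => Q'0; rewrite def_Q Q'0 mul0r.
have lt_Q'n : (size Q' < n)%N.
  by move: lt_Qn; rewrite def_Q size_mul ?polyXsubC_eq0 // size_XsubC addn2.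
move=> dQ; have d_sub : exp_decaying (shift_sub beta b).
  apply: (IH Q') => //.
  - by move=> z /Q_roots; rewrite def_Q rootM negb_or => /andP[].
  - exact: subexponential_shift_sub.
  - by apply: eq_exp_decaying dQ => k; rewrite def_Q poly_shift_mulXsubC.
have [beta_lt1|beta_gt1|/Q_roots] := real_ltgtP (normr_real beta) (real1 R).
- exact: exp_decaying_shift_sub_lt1 beta_lt1 d_sub.
- exact: exp_decaying_shift_sub_gt1 sb beta_gt1 d_sub.
- by rewrite root_beta.
Qed.

Lemma eventually0_of_poly_shift Q (a : nat -> int) : Q != 0 -> no_unit_root Q ->
  subexponential (fun k => (a k)%:~R : R) ->
  (forall k, poly_shift Q (fun k => (a k)%:~R) k = 0) ->
  exists N, forall k, (N <= k)%N -> a k = 0.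
Proof.
move=> Q_neq0 Q_roots sa rec_a.
have [|C [rho [C_ge0 rho_ge0 rho_lt1 bound]]] := exp_decaying_poly_shift Q_neq0 Q_roots sa.
  by exists 0, 0; split => // k; rewrite rec_a normr0 mul0r.
have [N small] := exists_mul_expr_lt C_ge0 rho_ge0 rho_lt1 ltr01.
exists N => k le_Nk.
have : `|(a k)%:~R : R| < 1.
  apply: le_lt_trans (bound k) (le_lt_trans _ small).
  by rewrite ler_wpM2l // ler_wiXn2l // ltW.
by rewrite -intr_norm -[1]/(1%:~R) ltr_int => ?; lia.
Qed.

End UnitCircleFree.

Lemma exists_ratr_gt1_le (R : archiNumFieldType) (g : R) : 1 < g ->
  exists e : rat, 0 < e /\ ratr (1 + e) <= g.
Proof.
move=> g_gt1; have g1_gt0 : 0 < g - 1 by rewrite subr_gt0.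
have /andP[_] := truncn_itv (ltW (divr_gt0 ltr01 g1_gt0)); set n := (Num.truncn _).+1.
rewrite ltr_pdivrMr // -ltr_pdivrMl ?ltr0n // mulr1 => lt_inv_n.
exists n%:R^-1; split; first by rewrite invr_gt0 ltr0n.
by rewrite rmorphD rmorph1 fmorphV rmorph_nat -lerBrDl ltW.
Qed.

Definition left_finite (c : series) := exists m : int, forall n, n < m -> c n = 0.

Definition subexponential_series (c : series) := forall e : rat, 0 < e ->
  exists K : rat, forall m : int, (`|c m|)%:~R <= K * (1 + e) ^+ `|m|%N.

Lemma series_bound_ge0 (c : series) (e K : rat) :
  (forall m : int, (`|c m|)%:~R <= K * (1 + e) ^+ `|m|%N) -> 0 <= K.
Proof. by move=> /(_ 0); rewrite expr0 mulr1; apply: le_trans; rewrite ler0z. Qed.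

Lemma subexponential_series_of_ac c : almost_convergent c -> subexponential_series c.
Proof.
move=> [pos neg] e e_gt0.
have [N1 bound_pos] := pos e e_gt0; have [N2 bound_neg] := neg e e_gt0.
pose F n : rat := (`|c n%:Z|)%:~R + (`|c (- n%:Z)|)%:~R.
have F_ge0 n : 0 <= F n by rewrite addr_ge0 ?ler0z.
have le_F (m : int) : (`|c m|)%:~R <= F `|m|%N.
  by case: m => n; rewrite ?NegzE /F /= ?lerDl ?lerDr ler0z.
exists (1 + \sum_(j < N1 + N2) F j) => m.
have e_pow_ge1 : 1 <= (1 + e) ^+ `|m|%N by rewrite exprn_ege1 // lerDl ltW.
have [lt_mN|le_Nm] := ltnP `|m|%N (N1 + N2).
  apply: le_trans (le_F m) (le_trans _ (ler_peMr _ e_pow_ge1)); last first.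
    by rewrite addr_ge0 ?sumr_ge0.
  by rewrite (bigD1 (Ordinal lt_mN)) //= addrCA lerDl addr_ge0 ?sumr_ge0.
apply: le_trans (_ : (1 + e) ^+ `|m|%N <= _); last first.
  by rewrite ler_peMl ?(le_trans ler01) // lerDl sumr_ge0.
case: m le_Nm {e_pow_ge1} => n; rewrite ?NegzE /= => le_Nn.
  by apply: bound_pos; apply: leq_trans le_Nn; rewrite leq_addr.
by apply: bound_neg; apply: leq_trans le_Nn; rewrite leq_addl.
Qed.

Lemma ac_of_subexponential_series c : subexponential_series c -> almost_convergent c.
Proof.
move=> sc; suff ev (e : rat) : 0 < e -> exists N : nat, forall m : int,
    (N <= `|m|)%N -> (`|c m|)%:~R <= (1 + e) ^+ `|m|%N.
  split=> e /ev[N bound]; exists N => n le_Nn; first exact: (bound n%:Z).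
  by have := bound (- n%:Z); rewrite abszN; apply.
move=> e_gt0; set e' := e / (e + 3).
have e'_gt0 : 0 < e' by rewrite divr_gt0 // addr_gt0.
have e'_sq : (1 + e') ^+ 2 <= 1 + e.
  have e'_lt1 : e' < 1 by rewrite ltr_pdivrMr ?addr_gt0 // mul1r ltrDl.
  have : e' * (e + 3) = e by rewrite divfK // gt_eqF // addr_gt0.
  nra.
have [K bound] := sc e' e'_gt0; have K_ge0 := series_bound_ge0 bound.
have e'1_gt1 : 1 < 1 + e' by rewrite ltrDl.
have [N K_lt] := exists_gt_mul_expr ltr01 e'1_gt1 K_ge0; rewrite mul1r in K_lt.
exists N => m le_Nm; apply: le_trans (bound m) _.
have e'1_ge0 : 0 <= 1 + e' := le_trans ler01 (ltW e'1_gt1).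
apply: le_trans (_ : (1 + e') ^+ `|m|%N * (1 + e') ^+ `|m|%N <= _).
  rewrite ler_wpM2r ?exprn_ge0 //.
  exact: le_trans (ltW K_lt) (ler_weXn2l (ltW e'1_gt1) le_Nm).
rewrite -expr2 -exprM mulnC exprM; apply: lerXn2r e'_sq.
  by rewrite nnegrE exprn_ge0.
by rewrite nnegrE addr_ge0 // ltW.
Qed.

Lemma subexponential_seriesP c : almost_convergent c <-> subexponential_series c.
Proof. by split; [exact: subexponential_series_of_ac | exact: ac_of_subexponential_series]. Qed.

Lemma subexponential_series_lmul f c :
  subexponential_series c -> subexponential_series (lmul f c).
Proof.
move=> sc e e_gt0; have [K bound] := sc e e_gt0; have K_ge0 := series_bound_ge0 bound.
have e1_ge1 : 1 <= 1 + e by rewrite lerDl ltW.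
exists (\sum_(i < size (lp f)) (`|(lp f)`_i|)%:~R * (K * (1 + e) ^+ (`|lsh f|%N + i)%N)) => m.
rewrite mulr_suml /lmul intr_norm rmorph_sum /=.
apply: le_trans (ler_norm_sum _ _ _) _; apply: ler_sum => i _.
rewrite rmorphM /= normrM -!intr_norm -mulrA ler_wpM2l ?ler0z //.
apply: le_trans (bound _) _; rewrite -mulrA ler_wpM2l // -exprD ler_weXn2l //.
lia.
Qed.

Lemma subexponential_left_tail (R : archiNumFieldType) c (j : int) :
  subexponential_series c -> subexponential (fun k => (c (j - k%:Z))%:~R : R).
Proof.
move=> sc g g_gt1; have [e [e_gt0 le_e_g]] := exists_ratr_gt1_le g_gt1.
have [K bound] := sc e e_gt0; have K_ge0 := series_bound_ge0 bound.
have e1_ge1 : 1 <= 1 + e by rewrite lerDl ltW.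
exists (ratr (K * (1 + e) ^+ `|j|%N)) => k.
apply: le_trans (_ : ratr (K * (1 + e) ^+ `|j|%N * (1 + e) ^+ k) <= _).
  rewrite -intr_norm -ratr_int ler_rat; apply: le_trans (bound _) _.
  by rewrite -mulrA -exprD ler_wpM2l // ler_weXn2l //; lia.
have e1_ge0 : 0 <= 1 + e := le_trans ler01 e1_ge1.
have r_ge0 : 0 <= ratr (1 + e) :> R by rewrite ler0q.
rewrite rmorphM /= rmorphXn /=; apply: ler_wpM2l; first by rewrite ler0q mulr_ge0 ?exprn_ge0.
by apply: lerXn2r; rewrite // nnegrE (le_trans r_ge0).
Qed.

Lemma hyperbolic_lp f : hyperbolic f ->
  map_poly intr (lp f) != 0 :> {poly algC} /\ no_unit_root (map_poly intr (lp f) : {poly algC}).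
Proof.
move=> hf; split.
  by apply: contraTneq (hf 1 (normr1 _)) => Q0; rewrite /leval Q0 horner0 mulr0 eqxx.
by move=> z /hf; rewrite /leval mulf_eq0 negb_or => /andP[].
Qed.

Lemma lmul_left_tail (R : numDomainType) f c (j : int) k :
  ((lmul f c (j - k%:Z + lsh f))%:~R : R) =
  poly_shift (map_poly intr (lp f)) (fun k => (c (j - k%:Z))%:~R) k.
Proof.
rewrite /poly_shift size_map_inj_poly ?mulr0z //; last exact: intr_inj.
rewrite /lmul rmorph_sum; apply: eq_bigr => i _; rewrite coef_map rmorphM /=.
by rewrite addrK PoszD opprD addrA.
Qed.

Lemma almost_convergent_lmul f c d :
  d =1 lmul f c -> almost_convergent c -> almost_convergent d.
Proof.
move=> def_d /subexponential_seriesP /(subexponential_series_lmul f) sd.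
by apply/subexponential_seriesP => e /sd[K bound]; exists K => m; rewrite def_d.
Qed.

Lemma left_finite_lmul f c d : d =1 lmul f c -> left_finite c -> left_finite d.
Proof.
move=> def_d [m c0]; exists (m + lsh f) => n lt_n.
by rewrite def_d /lmul big1 // => i _; rewrite c0 ?mulr0 //; lia.
Qed.

Lemma left_finite_of_lmul f c d : hyperbolic f -> d =1 lmul f c ->
  almost_convergent c -> left_finite d -> left_finite c.
Proof.
move=> /hyperbolic_lp[Q_neq0 Q_roots] def_d /subexponential_seriesP sc [m d0].
set j := m - lsh f - 1.
have [|N tail0] := eventually0_of_poly_shift Q_neq0 Q_roots (subexponential_left_tail j sc).
  by move=> k; rewrite -lmul_left_tail -def_d d0 // /j; lia.
clearbody j; exists (j - N%:Z + 1) => n lt_n.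
have abs_jn : `|j - n|%N = j - n :> int by apply: gez0_abs; lia.
have := tail0 `|j - n|%N; rewrite abs_jn subKr; apply; lia.
Qed.

Theorem mainTheorem2 (f : laurent) (hf : hyperbolic f) (d : series) :
  ((exists c : series, almost_convergent c /\ forall n, d n = lmul f c n)
     /\ Zac_half d)
  <-> (exists c : series, Zac_half c /\ forall n, d n = lmul f c n).
Proof.
split.
- move=> [[c [ac_c def_d]] [ac_d left_d]]; exists c; split => //; split => //.
  exact: left_finite_of_lmul hf def_d ac_c left_d.
- move=> [c [[ac_c left_c] def_d]]; split; first by exists c.
  split; first exact: almost_convergent_lmul def_d ac_c.
  exact: left_finite_lmul def_d left_c.
Qed.
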